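(* Consider the Hamiltonian control system described in the context satisfying (A1), (A2), and suppose (A5) holds with constant $\epsilon$. Then for all $x\in\mathcal{X}\setminus H_{\mathrm{tgt}}$, $$v_\epsilon(x)\le L_H C_f \quad\text{and}\quad T_\epsilon^\star(x)\ge \frac{\epsilon}{L_H C_f}.$$
   Context: System: $\dot x = f(x,u)=J(x)\nabla H(x)+G(x)u$, with state $x\in\mathcal{X}\subset\mathbb{R}^n$, $\mathcal{X}$ compact, $H:\mathbb{R}^n\to\mathbb{R}$, $J(x)$ skew-symmetric, input $u\in U\subset\mathbb{R}^m$, $U$ compact. Admissible control signals are piecewise continuous measurable maps into $U$; $\phi(t,x,u)$ denotes the state at time $t$ from $x$ under $u$. (A1) $H$ is $C^1$ on $\mathcal{X}$ and $\|\nabla H(x)\|\le L_H$ on $\mathcal{X}$. (A2) There is $L>0$ with $\|f(x_1,u)-f(x_2,u)\|\le L\|x_1-x_2\|$ for all $x_1,x_2\in\mathcal{X}$, $u\in U$. $C_f>0$ is a constant with $\|f(x,u)\|\le C_f$ for all $x\in\mathcal{X}$, $u\in U$. Target: $S_{\mathrm{tgt}}\subseteq\mathcal{X}$ compact and connected, $H(S_{\mathrm{tgt}})=[H_{\min},H_{\max}]$, $H_+^\star=(H_{\max}+H_{\min})/2$, $H_-^\star=(H_{\max}-H_{\min})/2$, $\Delta H(x):=|H(x)-H_+^\star|-H_-^\star$; $H_{\mathrm{tgt}}:=\{x\in\mathcal{X}:\Delta H(x)\le0\}$, and for $0<\epsilon<H_-^\star$, $H_{\mathrm{tgt}}^\epsilon:=\{x\in\mathcal{X}:\Delta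 H(x)\le-\epsilon\}$. $T_\epsilon(x,u):=\inf\{t>0:\phi(t,x,u)\in H_{\mathrm{tgt}}^\epsilon\}$, $T_\epsilon^\star(x):=\inf_u T_\epsilon(x,u)$, $v_\epsilon(x):=(\Delta H(x)+\epsilon)/T_\epsilon^\star(x)$. (A5) There exists $\epsilon>0$ with $\inf_{x\in\mathcal{X}\setminus H_{\mathrm{tgt}}^\epsilon}v_\epsilon(x)>0$. *)

From HB Require Import structures.
From mathcomp Require Import all_boot all_order all_algebra.
From mathcomp Require Import all_classical all_reals all_analysis.
Set Implicit Arguments. Unset Strict Implicit. Unset Printing Implicit Defensive.
Import Order.TTheory GRing.Theory Num.Theory.
Import numFieldNormedType.Exports.
Local Open Scope classical_set_scope.
Local Open Scope ring_scope.

Definition enorm (R : realType) (k : nat) (v : 'cV[R]_k) : R :=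
  Num.sqrt (\sum_(i < k) v i 0 ^+ 2).

Definition edot (R : realType) (k : nat) (v w : 'cV[R]_k) : R :=
  \sum_(i < k) v i 0 * w i 0.

(* Delta H(x) = |H(x) - H_+^*| - H_-^*. *)
Definition DeltaH (R : realType) (n : nat) (H : 'cV[R]_n -> R)
  (Hmin Hmax : R) (x : 'cV[R]_n) : R :=
  `|H x - (Hmax + Hmin) / 2| - (Hmax - Hmin) / 2.

Definition Htgt (R : realType) (n : nat) (X : set 'cV[R]_n)
  (H : 'cV[R]_n -> R) (Hmin Hmax : R) : set 'cV[R]_n :=
  [set x | X x /\ DeltaH H Hmin Hmax x <= 0].

Definition Htgt_eps (R : realType) (n : nat) (X : set 'cV[R]_n)
  (H : 'cV[R]_n -> R) (Hmin Hmax eps : R) : set 'cV[R]_n :=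
  [set x | X x /\ DeltaH H Hmin Hmax x <= - eps].

Definition piecewise_continuous (R : realType) (m : nat)
  (u : R -> 'cV[R]_m) : Prop :=
  forall T : R, exists s : seq R,
    forall t : R, 0 <= t <= T -> t \notin s -> {for t, continuous u}.

Definition admissible (R : realType) (m : nat) (U : set 'cV[R]_m)
  (u : R -> 'cV[R]_m) : Prop :=
  (forall t, U (u t)) /\
  (forall i : 'I_m, measurable_fun setT (fun t => u t i 0)) /\
  piecewise_continuous u.

(* phi is the flow: for every x in X and admissible u, t |-> phi t x u is a
   (Caratheodory) solution of xdot = f(x,u) with phi 0 x u = x, i.e.
   phi t x u = x + \int_0^t f(phi s x u, u s) ds for t >= 0. *)
Definition is_flow (R : realType) (n m : nat)
  (f : 'cV[R]_n -> 'cV[R]_m -> 'cV[R]_n)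
  (phi : R -> 'cV[R]_n -> (R -> 'cV[R]_m) -> 'cV[R]_n) (t : R)
  (x : 'cV[R]_n) (u : R -> 'cV[R]_m) : Prop :=
  forall i : 'I_n,
    (lebesgue_measure).-integrable `[0%R, t]
       (fun s => ((f (phi s x u) (u s)) i 0)%:E) /\
    phi t x u i 0 = x i 0 +
      Rintegral lebesgue_measure `[0%R, t] (fun s => (f (phi s x u) (u s)) i 0).

(* T_eps(x,u) = inf {t > 0 : phi(t,x,u) in H_tgt^eps}  (inf of empty = +oo) *)
Definition T_eps (R : realType) (n m : nat) (X : set 'cV[R]_n)
  (H : 'cV[R]_n -> R) (Hmin Hmax eps : R)
  (phi : R -> 'cV[R]_n -> (R -> 'cV[R]_m) -> 'cV[R]_n)
  (x : 'cV[R]_n) (u : R -> 'cV[R]_m) : \bar R :=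
  ereal_inf [set t%:E | t in [set t : R | 0 < t /\
                               Htgt_eps X H Hmin Hmax eps (phi t x u)]].

Definition Tstar_eps (R : realType) (n m : nat) (X : set 'cV[R]_n)
  (U : set 'cV[R]_m) (H : 'cV[R]_n -> R) (Hmin Hmax eps : R)
  (phi : R -> 'cV[R]_n -> (R -> 'cV[R]_m) -> 'cV[R]_n)
  (x : 'cV[R]_n) : \bar R :=
  ereal_inf [set T_eps X H Hmin Hmax eps phi x u | u in admissible U].

(* v_eps(x) = (Delta H(x) + eps) / T_eps^*(x)   (with 1/+oo = 0) *)
Definition v_eps (R : realType) (n m : nat) (X : set 'cV[R]_n)
  (U : set 'cV[R]_m) (H : 'cV[R]_n -> R) (Hmin Hmax eps : R)
  (phi : R -> 'cV[R]_n -> (R -> 'cV[R]_m) -> 'cV[R]_n)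
  (x : 'cV[R]_n) : \bar R :=
  ((DeltaH H Hmin Hmax x + eps)%:E *
     (Tstar_eps X U H Hmin Hmax eps phi x)^-1)%E.

(* Along an admissible trajectory H changes at rate <grad H, f>, of size at most
   L_H C_f, so |H(phi t x u) - H x| <= L_H C_f t.  Since Delta H is 1-Lipschitz in H,
   reaching H_tgt^eps from a point x with Delta H(x) > 0 forces
   Delta H(x) + eps <= L_H C_f t; taking infima over times and controls bounds
   T_eps^*(x) below by (Delta H(x) + eps) / (L_H C_f), which gives both claims.
   Trajectories are only Caratheodory solutions, so the drift bound comes from the
   first-order expansion of H at each point of [0, t], made global on [0, t] by a
   supremum argument, instead of from a chain rule. *)

From HB Require Import structures.
From mathcomp Require Import all_boot all_order all_algebra.
From mathcomp Require Import all_classical all_reals all_analysis.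
From mathcomp Require Import ring lra measurable_realfun.
Set Implicit Arguments.
Unset Strict Implicit.
Unset Printing Implicit Defensive.

Import Order.TTheory GRing.Theory Num.Theory.
Import numFieldNormedType.Exports.
Local Open Scope classical_set_scope.
Local Open Scope ring_scope.

Section lipschitz_of_local.
Context {R : realType}.
Variables (g : R -> R) (a b : R).
Hypothesis ab : a <= b.

Lemma lipschitz_itv_of_local (K : R) :
  (forall s, a <= s <= b -> exists2 eta, 0 < eta & forall s', a <= s' <= b ->
     `|s' - s| < eta -> `|g s' - g s| <= K * `|s' - s|) ->
  `|g b - g a| <= K * (b - a).
Proof.
move=> loc.
pose A := [set s | a <= s <= b /\ `|g s - g a| <= K * (s - a)].
have Aa : A a by split; rewrite ?lexx ?ab // !subrr normr0 mulr0.
have ubA : ubound A b by move=> s [/andP[_ ->]].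
have supA : has_sup A by split; [exists a | exists b].
set c := sup A.
have ac : a <= c by apply: sup_upper_bound.
have cb : c <= b by apply: ge_sup => //; exists a.
have [eta eta0 near_c] := loc c ltac:(by rewrite ac cb).
have Ac : A c.
  have [s As cs] := sup_adherent eta0 supA.
  have sc : s <= c by apply: sup_upper_bound.
  case: As => /andP[a_s sb] gsa.
  have := near_c s ltac:(by rewrite a_s sb).
  rewrite distrC ger0_norm ?subr_ge0 //.
  move=> /(_ ltac:(by move: cs; rewrite -/c; lra)) gcs.
  split; first by rewrite ac cb.
  rewrite (le_trans (ler_distD (g s) _ _)) // distrC; move: gcs gsa; nra.
suff cE : c = b by case: Ac; rewrite cE.
apply/eqP; rewrite eq_le cb leNgt; apply/negP => cltb.
pose s := Num.min b (c + eta / 2).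
have sb : s <= b by rewrite ge_min lexx.
have cs : c < s by rewrite lt_min cltb ltrDl divr_gt0.
have As : A s.
  have := near_c s ltac:(by rewrite sb (le_trans ac (ltW cs))).
  rewrite ger0_norm ?subr_ge0 ?(ltW cs) //.
  have sc2 : s <= c + eta / 2 by rewrite ge_min lexx orbT.
  move=> /(_ ltac:(by move: sc2 eta0; lra)) gsc.
  split; first by rewrite sb (le_trans ac (ltW cs)).
  case: Ac => _ Ac; rewrite (le_trans (ler_distD (g c) _ _)) //; move: gsc Ac; nra.
by have := sup_upper_bound supA As; rewrite -/c; move: cs; lra.
Qed.

Lemma lipschitz_itv_of_local_approx (K : R) :
  (forall s, a <= s <= b -> forall e, 0 < e -> exists2 eta, 0 < eta &
     forall s', a <= s' <= b -> `|s' - s| < eta -> `|g s' - g s| <= (K + e) * `|s' - s|) ->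
  `|g b - g a| <= K * (b - a).
Proof.
move=> loc; apply/ler_addgt0Pr => e e0.
have len0 : 0 < b - a + 1 by move: ab; lra.
have e'0 : 0 < e / (b - a + 1) by rewrite divr_gt0.
have := lipschitz_itv_of_local (K := K + e / (b - a + 1)) (fun s hs => loc s hs _ e'0).
have : e / (b - a + 1) * (b - a) <= e.
  by rewrite mulrAC ler_pdivrMr // ler_pM2l //; lra.
nra.
Qed.

End lipschitz_of_local.

Section euclidean.
Context {R : realType} {k : nat}.
Implicit Types v w : 'cV[R]_k.

Let sum_sqr_ge0 v : 0 <= \sum_(i < k) v i 0 ^+ 2.
Proof. by apply: sumr_ge0 => i _; exact: sqr_ge0. Qed.

Lemma enorm_ge0 v : 0 <= enorm v.
Proof. exact: sqrtr_ge0. Qed.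

Lemma enorm_sqr v : enorm v ^+ 2 = edot v v.
Proof. by rewrite sqr_sqrtr ?sum_sqr_ge0 //; apply: eq_bigr => i _; rewrite expr2. Qed.

Lemma edotBr v w w' : edot v (w - w') = edot v w - edot v w'.
Proof. by rewrite /edot -sumrB; apply: eq_bigr => i _; rewrite !mxE mulrBr. Qed.

Lemma coord_le_enorm v i : `|v i 0| <= enorm v.
Proof.
rewrite -sqrtr_sqr ler_sqrt ?sum_sqr_ge0 // (bigD1 i) //= lerDl.
by apply: sumr_ge0 => j _; exact: sqr_ge0.
Qed.

Lemma mx_norm_le_enorm v : `|v| <= enorm v.
Proof.
rewrite [`|v|]mx_normrE; apply: bigmax_le; first exact: enorm_ge0.
by move=> [i j] _; rewrite (ord1 j) coord_le_enorm.
Qed.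

Lemma edot_CauchySchwarz v w : `|edot v w| <= enorm v * enorm w.
Proof.
rewrite -sqrtrM ?sum_sqr_ge0 // -sqrtr_sqr ler_sqrt ?mulr_ge0 ?sum_sqr_ge0 //.
set A := \sum_(i < k) v i 0 ^+ 2; set B := \sum_(i < k) w i 0 ^+ 2.
have [A0 | A_neq0] := eqVneq A 0.
  have v0 i : v i 0 = 0.
    apply/eqP; rewrite -sqrf_eq0 eq_le sqr_ge0 andbT -A0 /A (bigD1 i) //= lerDl.
    by apply: sumr_ge0 => j _; exact: sqr_ge0.
  by rewrite /edot big1 ?expr0n ?A0 ?mul0r // => i _; rewrite v0 mul0r.
have A_gt0 : 0 < A by rewrite lt_def A_neq0 sum_sqr_ge0.
(* evaluate the nonnegative quadratic t |-> sum_i (t v_i - w_i)^2 at its minimum t = edot v w / A *)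
have quad t : t ^+ 2 * A - 2 * t * edot v w + B = \sum_(i < k) (t * v i 0 - w i 0) ^+ 2.
  rewrite /A /B /edot !mulr_sumr -!sumrN -!big_split /=.
  by apply: eq_bigr => i _; ring.
have := sum_sqr_ge0 (edot v w / A *: v - w).
under eq_bigr do rewrite !mxE.
rewrite -quad; have -> : (edot v w / A) ^+ 2 * A - 2 * (edot v w / A) * edot v w + B
    = B - edot v w ^+ 2 / A by field.
by rewrite subr_ge0 ler_pdivrMr // mulrC.
Qed.

End euclidean.

Section Rintegral_sum.
Context {d} {T : measurableType d} {R : realType} {mu : {measure set T -> \bar R}}.
Context {D : set T} {I : Type} {F : I -> T -> R}.
Hypotheses (mD : measurable D) (intF : forall i, mu.-integrable D (EFin \o F i)).

Lemma integrable_Rsum (s : seq I) :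
  mu.-integrable D (EFin \o (fun x => \sum_(i <- s) F i x)).
Proof.
apply: (eq_integrable mD (fun x => \sum_(i <- s) (F i x)%:E)).
  by move=> x _; rewrite /= sumEFin.
by apply: (integrable_sum mD) => i _; exact: intF.
Qed.

Lemma Rintegral_sum (s : seq I) :
  \int[mu]_(x in D) \sum_(i <- s) F i x = \sum_(i <- s) \int[mu]_(x in D) F i x.
Proof.
elim: s => [|i s ih].
  by under eq_Rintegral do rewrite big_nil; rewrite big_nil Rintegral_cst // mul0r.
under eq_Rintegral do rewrite big_cons.
by rewrite big_cons RintegralD ?ih //; exact: integrable_Rsum.
Qed.

End Rintegral_sum.

Lemma Rintegral_itv_diff_le (R : realType) (F : R -> R) (a s s' M : R) :
  a <= s -> s <= s' ->
  lebesgue_measure.-integrable `[a, s'] (EFin \o F) ->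
  (forall r, s < r <= s' -> `|F r| <= M) ->
  `|\int[lebesgue_measure]_(x in `[a, s']) F x -
    \int[lebesgue_measure]_(x in `[a, s]) F x| <= M * (s' - s).
Proof.
move=> a_s ss' intF boundF.
rewrite Rintegral_itvB ?bnd_simp //.
have intF' : lebesgue_measure.-integrable `]s, s'] (EFin \o F).
  by apply: integrableS intF => //; apply: subset_itvScc; rewrite bnd_simp.
apply: (le_trans (le_normr_Rintegral _ _)) => //.
have -> : M * (s' - s) = \int[lebesgue_measure]_(x in `]s, s']) M.
  rewrite Rintegral_cst //; have := @lebesgue_measure_itv R `]s, s'].
  rewrite /= lte_fin => ->.
  by case: ltP => [//|s's]; rewrite (_ : s' = s) ?subrr //; apply/eqP; rewrite eq_le s's ss'.
apply: le_Rintegral => //; first exact: integrable_norm.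
apply/integrableP; split; first exact/measurable_EFinP/measurable_cst.
rewrite integral_cst //= lebesgue_measure_itv /=.
by case: ifP => _; rewrite -?EFinD -?EFinM ?mule0 ltry.
Qed.

Lemma differentiable_remainder_le {R : realType} {V W : normedModType R} {f : V -> W} {y : V} :
  differentiable f y -> forall e, 0 < e -> exists2 d, 0 < d &
    forall h, `|h| < d -> `|f (y + h) - f y - 'd f y h| <= e * `|h|.
Proof.
move=> df e e0; have /eqaddoP/(_ e e0)/nbhs_normP[d d0 small] := diff_locally df.
exists d => // h hd; have := small h; rewrite /ball_ /= sub0r normrN => /(_ hd).
by rewrite !fctE /= [y + h]addrC opprD addrA.
Qed.

Section flow.
Variables (R : realType) (n : nat) (p Fv : R -> 'cV[R]_n) (x0 : 'cV[R]_n) (C : R).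
Hypothesis p_integral_eq : forall t, 0 <= t -> forall i : 'I_n,
  lebesgue_measure.-integrable `[0, t] (EFin \o (fun s => Fv s i 0)) /\
  p t i 0 = x0 i 0 + \int[lebesgue_measure]_(s in `[0, t]) Fv s i 0.
Hypothesis Fv_bounded : forall t, 0 <= t -> enorm (Fv t) <= C.

Lemma flow_at0 : p 0 = x0.
Proof.
apply/matrixP => i j; rewrite (ord1 j).
by have [_ ->] := p_integral_eq (lexx 0) i; rewrite set_itv1 Rintegral_set1 addr0.
Qed.

Lemma edot_flow_integral_eq (a : 'cV[R]_n) t : 0 <= t ->
  lebesgue_measure.-integrable `[0, t] (EFin \o (fun s => edot a (Fv s))) /\
  edot a (p t) = edot a x0 + \int[lebesgue_measure]_(s in `[0, t]) edot a (Fv s).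
Proof.
move=> t0.
have mI : measurable (`[0, t] : set (g_sigma_algebraType R.-ocitv.-measurable)).
  exact: measurable_itv.
have intF i : lebesgue_measure.-integrable `[0, t] (EFin \o (fun s => a i 0 * Fv s i 0)).
  have := integrableZl mI (a i 0) (proj1 (p_integral_eq t0 i)).
  by apply: eq_integrable => // s _; rewrite /= EFinM.
split; first exact: (integrable_Rsum mI intF).
rewrite /edot (Rintegral_sum mI intF) -big_split /=.
apply: eq_bigr => i _; have [intFi ->] := p_integral_eq t0 i.
by rewrite RintegralZl // mulrDr.
Qed.

Lemma edot_flow_increment_le (a : 'cV[R]_n) s s' : 0 <= s -> 0 <= s' ->
  `|edot a (p s') - edot a (p s)| <= enorm a * C * `|s' - s|.
Proof.
wlog ss' : s s' / s <= s' => [gen s0 s'0|s0 s'0].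
  have [/gen|/ltW/gen] := leP s s'; first exact.
  by rewrite distrC (distrC s'); exact.
have [int' eq'] := edot_flow_integral_eq a s'0; have [_ eq] := edot_flow_integral_eq a s0.
rewrite eq eq' opprD addrACA subrr add0r [`|s' - s|]ger0_norm ?subr_ge0 //.
apply: Rintegral_itv_diff_le => // r /andP[sr _].
apply: (le_trans (edot_CauchySchwarz _ _)).
rewrite ler_wpM2l ?enorm_ge0 //; apply: Fv_bounded; exact: le_trans s0 (ltW sr).
Qed.

Lemma enorm_flow_increment_le s s' : 0 <= s -> 0 <= s' ->
  enorm (p s' - p s) <= C * `|s' - s|.
Proof.
move=> s0 s'0; set h := p s' - p s.
have := edot_flow_increment_le h s0 s'0; rewrite -edotBr -/h -enorm_sqr.
rewrite ger0_norm ?sqr_ge0 // expr2 -mulrA.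
have := enorm_ge0 h; have : 0 <= C * `|s' - s|.
  by rewrite mulr_ge0 // (le_trans (enorm_ge0 (Fv 0)) (Fv_bounded (lexx 0))).
nra.
Qed.

Variables (H : 'cV[R]_n -> R) (gradH : 'cV[R]_n -> 'cV[R]_n) (L_H : R).
Hypothesis C_gt0 : 0 < C.
Hypothesis H_grad_along : forall t, 0 <= t ->
  differentiable H (p t) /\ forall v, 'd H (p t) v = edot (gradH (p t)) v.
Hypothesis gradH_bounded : forall t, 0 <= t -> enorm (gradH (p t)) <= L_H.

Lemma H_flow_drift_le t : 0 <= t -> `|H (p t) - H x0| <= L_H * C * t.
Proof.
move=> t0; rewrite -[in H x0]flow_at0 -[t in _ * t]subr0.
apply: (@lipschitz_itv_of_local_approx _ (fun s => H (p s)) 0 t t0 (L_H * C)).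
move=> s /andP[s0 _] e e0.
have [dH dHE] := H_grad_along s0.
have [d d0 rem_le] := differentiable_remainder_le dH (divr_gt0 e0 C_gt0).
exists (d / C); first by rewrite divr_gt0.
move=> s' /andP[s'0 _] s's_lt; set h := p s' - p s.
have h_le : `|h| <= C * `|s' - s|.
  exact: le_trans (mx_norm_le_enorm h) (enorm_flow_increment_le s0 s'0).
have h_lt : `|h| < d.
  by apply: le_lt_trans h_le _; rewrite mulrC -ltr_pdivlMr.
have lin_le : `|'d H (p s) h| <= L_H * C * `|s' - s|.
  rewrite dHE (le_trans (edot_CauchySchwarz _ _)) // -mulrA.
  by apply: ler_pM; rewrite ?enorm_ge0 //; [exact: gradH_bounded | exact: enorm_flow_increment_le].
have rem_small : e / C * `|h| <= e * `|s' - s|.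
  by rewrite -mulrA ler_pM2l // ler_pdivrMl.
have -> : p s' = p s + h by rewrite /h addrC subrK.
rewrite -[H _ - _](subrK ('d H (p s) h)) (le_trans (ler_normD _ _)) //.
by move: (rem_le h h_lt) rem_small lin_le; lra.
Qed.

End flow.

Lemma DeltaH_le (R : realType) (n : nat) (H : 'cV[R]_n -> R) (Hmin Hmax : R) (x y : 'cV[R]_n) :
  DeltaH H Hmin Hmax x <= DeltaH H Hmin Hmax y + `|H x - H y|.
Proof.
rewrite /DeltaH addrAC lerD2r; set c := (Hmax + Hmin) / 2.
by rewrite (_ : H x - c = (H y - c) + (H x - H y)) ?ler_normD //; ring.
Qed.

Section arrival_time.
Variables (R : realType) (n m : nat) (X : set 'cV[R]_n) (U : set 'cV[R]_m).
Variables (H : 'cV[R]_n -> R) (Hmin Hmax eps : R).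
Variables (phi : R -> 'cV[R]_n -> (R -> 'cV[R]_m) -> 'cV[R]_n) (x : 'cV[R]_n).
Local Notation Tstar := (Tstar_eps X U H Hmin Hmax eps phi x).
Local Notation reaches u t := (Htgt_eps X H Hmin Hmax eps (phi t x u)).

Lemma Tstar_eps_ge (b : \bar R) :
  (forall u t, admissible U u -> 0 < t -> reaches u t -> (b <= t%:E)%E) -> (b <= Tstar)%E.
Proof.
move=> arrival; apply: le_ereal_inf_tmp => _ [u au <-].
by apply: le_ereal_inf_tmp => _ [t [t0 tgt] <-]; exact: (arrival u t au t0 tgt).
Qed.

Lemma Tstar_eps_ratio_bounds (c K : R) : 0 < c -> 0 <= K ->
  (forall u t, admissible U u -> 0 < t -> reaches u t -> c <= K * t) ->
  ((c / K)%:E <= Tstar)%E /\ (c%:E * Tstar^-1 <= K%:E)%E.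
Proof.
move=> c_gt0; rewrite le_eqVlt => /predU1P[K_eq0 | K_gt0] arrival.
  have : (+oo <= Tstar)%E.
    apply: Tstar_eps_ge => u t au t0 tgt; have := arrival u t au t0 tgt.
    by rewrite -K_eq0 mul0r => /(lt_le_trans c_gt0); rewrite ltxx.
  by rewrite leye_eq => /eqP ->; rewrite invey mule0 -K_eq0 invr0 mulr0 leey.
have ratio_le : ((c / K)%:E <= Tstar)%E.
  apply: Tstar_eps_ge => u t au t0 tgt.
  by rewrite lee_fin ler_pdivrMr // mulrC; exact: (arrival u t au t0 tgt).
split => //; move: ratio_le; case: Tstar => [r | | ] /=.
- rewrite lee_fin => ratio_le.
  have r_pos : 0 < r := lt_le_trans (divr_gt0 c_gt0 K_gt0) ratio_le.
  by rewrite inver gt_eqF // -EFinM lee_fin ler_pdivrMr // -ler_pdivrMl // mulrC.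
- by rewrite invey mule0 => _; rewrite lee_fin ltW.
- by rewrite leeNy_eq.
Qed.

End arrival_time.

Theorem mainTheorem2 (R : realType) (n m : nat)
  (X : set 'cV[R]_n) (U : set 'cV[R]_m)
  (H : 'cV[R]_n -> R) (gradH : 'cV[R]_n -> 'cV[R]_n)
  (J : 'cV[R]_n -> 'M[R]_n) (G : 'cV[R]_n -> 'M[R]_(n, m))
  (phi : R -> 'cV[R]_n -> (R -> 'cV[R]_m) -> 'cV[R]_n)
  (S_tgt : set 'cV[R]_n) (Hmin Hmax L_H C_f eps : R) :
  let f := fun (x : 'cV[R]_n) (u : 'cV[R]_m) => J x *m gradH x + G x *m u in
  compact X -> compact U ->
  (forall x, (J x)^T = - J x) ->
  (* phi is the flow of xdot = f(x,u), and trajectories stay in X *)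
  (forall x u t, X x -> admissible U u -> 0 <= t ->
     is_flow f phi t x u /\ X (phi t x u)) ->
  (* (A1): H is C^1 on X with gradient gradH, and ||grad H|| <= L_H on X *)
  (forall x, X x -> differentiable H x /\
     forall v, 'd H x v = edot (gradH x) v) ->
  {within X, continuous gradH} ->
  (forall x, X x -> enorm (gradH x) <= L_H) ->
  (* (A2) *)
  (exists L : R, 0 < L /\ forall x1 x2 u, X x1 -> X x2 -> U u ->
     enorm (f x1 u - f x2 u) <= L * enorm (x1 - x2)) ->
  (* C_f *)
  0 < C_f -> (forall x u, X x -> U u -> enorm (f x u) <= C_f) ->
  (* target set *)
  S_tgt `<=` X -> compact S_tgt -> connected S_tgt ->
  H @` S_tgt = `[Hmin, Hmax]%classic ->
  (* (A5) with constant eps, 0 < eps < H_-^* *)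
  0 < eps -> eps < (Hmax - Hmin) / 2 ->
  (0 < ereal_inf [set v_eps X U H Hmin Hmax eps phi x
                  | x in X `\` Htgt_eps X H Hmin Hmax eps])%E ->
  forall x, X x -> ~ Htgt X H Hmin Hmax x ->
    (v_eps X U H Hmin Hmax eps phi x <= (L_H * C_f)%:E)%E /\
    ((eps / (L_H * C_f))%:E <= Tstar_eps X U H Hmin Hmax eps phi x)%E.
Proof.
move=> f _ _ _ flow A1 _ gradH_le _ Cf_gt0 f_le _ _ _ _ eps_gt0 _ _ x Xx xNtgt.
have Dx_gt0 : 0 < DeltaH H Hmin Hmax x.
  by rewrite ltNge; apply/negP => Dx_le0; exact: xNtgt.
have K_ge0 : 0 <= L_H * C_f.
  by apply: mulr_ge0 (ltW Cf_gt0); exact: le_trans (enorm_ge0 _) (gradH_le x Xx).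
have arrival u t : admissible U u -> 0 < t -> Htgt_eps X H Hmin Hmax eps (phi t x u) ->
    DeltaH H Hmin Hmax x + eps <= L_H * C_f * t.
  move=> au t_gt0 [_ tgt].
  have stays s : 0 <= s -> X (phi s x u) by move=> s0; case: (flow x u s Xx au s0).
  have drift : `|H (phi t x u) - H x| <= L_H * C_f * t.
    apply: (H_flow_drift_le (p := fun s => phi s x u) (Fv := fun s => f (phi s x u) (u s))
      (x0 := x) _ _ Cf_gt0 _ _ (ltW t_gt0)) => s s0.
    - by move=> i; case: (flow x u s Xx au s0) => /(_ i).
    - exact: f_le (stays s s0) (proj1 au s).
    - exact: A1 (stays s s0).
    - exact: gradH_le (stays s s0).
  have := DeltaH_le H Hmin Hmax x (phi t x u).
  by move: drift tgt; rewrite distrC; lra.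
have [ratio_le speed_le] := Tstar_eps_ratio_bounds (addr_gt0 Dx_gt0 eps_gt0) K_ge0 arrival.
split => //; apply: le_trans ratio_le; rewrite lee_fin ler_wpM2r ?invr_ge0 //.
by rewrite lerDr ltW.
Qed.
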